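(* Let $K$ be an idempotent, linearly ordered, archimedian, commutative semiring. A series $S\in K[[X]]$ is rational if and only if it is a merge of finitely many ultimately geometric series. Equivalently, $S$ is rational if and only if there exist integers $\kappa\geq0$, $c\geq1$, a polynomial $P\in K[X]$ of degree less than $\kappa c$, and elements $u_0,\dots,u_{c-1},q_0,\dots,q_{c-1}\in K$ such that $$S=P\oplus X^{\kappa c}\Big(\bigoplus_{0\leq i\leq c-1}u_iX^i(q_iX^c)^*\Big).$$
   Context: $K$ is idempotent if $u\oplus u=u$; linearly ordered if $u\leq v\iff u\oplus v=v$ is a total order; archimedian if for all $u,v,\lambda,\mu\in K$, ($u\lambda^k\geq v\mu^k$ for all $k\geq0$) implies $v=\mathbb{0}$ or $\lambda\geq\mu$; commutative if $uv=vu$. $K[[X]]$ is the semiring of formal power series with coefficientwise sum and Cauchy product; $\langle S,X^k\rangle$ denotes the $k$-th coefficient of $S$; $U^*=\bigoplus_{k\ge0}U^k$ for $U$ with zero constant coefficient. Rational series: smallest subset of $K[[X]]$ containing $K[X]$ and closed under sum, product and star. A series $S$ is ultimately geometric if there exist an integer $\kappa$ and $\gamma\in K$ with $\langle S,X^{k+1}\rangle=\gamma\langle S,X^k\rangle$ for all $k\geq\kappa$. The merge of $c\ge1$ series $S^{(0)},\dots,S^{(c-1)}$ is the series $S^{(0)}(X^c)\oplus XS^{(1)}(X^c)\oplus\cdots\oplus X^{c-1}S^{(c-1)}(X^c)$ (its coefficient of $X^{kc+j}$ is $\langle S^{(j)},X^k\rangle$). *)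

From HB Require Import structures.
From mathcomp Require Import all_boot all_order all_algebra.
Set Implicit Arguments. Unset Strict Implicit. Unset Printing Implicit Defensive.
Import GRing.Theory.
Local Open Scope ring_scope.

Section Series.
Variable K : comPzSemiRingType.

Definition idempotent_sr := forall u : K, u + u = u.
Definition sr_le (u v : K) := u + v = v.
Definition linearly_ordered_sr := forall u v : K, sr_le u v \/ sr_le v u.
Definition archimedian_sr := forall u v lam mu : K,
  (forall k : nat, sr_le (v * mu ^+ k) (u * lam ^+ k)) -> v = 0 \/ sr_le mu lam.

Definition series := nat -> K.
Definition ser_add (S T : series) : series := fun n => S n + T n.
Definition ser_mul (S T : series) : series :=
  fun n => \sum_(i < n.+1) S i * T (n - i)%N.
Definition ser_C (a : K) : series := fun n => if n == 0%N then a else 0.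
Definition ser_Xn (m : nat) : series := fun n => if n == m then 1 else 0.
Definition ser_pow (U : series) (k : nat) : series := iter k (ser_mul U) (ser_C 1).
(* U^* = (+)_{k>=0} U^k; for U with zero constant coefficient, U^k has no
   coefficient of degree n for k > n, so the coefficient of X^n is the
   finite sum below. *)
Definition ser_star (U : series) : series :=
  fun n => \sum_(k < n.+1) ser_pow U k n.
Definition ser_bigsum (c : nat) (F : nat -> series) : series :=
  fun n => \sum_(i < c) F i n.

Definition is_poly (P : series) := exists N : nat, forall n, (N <= n)%N -> P n = 0.

Inductive rational : series -> Prop :=
| rat_poly P : is_poly P -> rational P
| rat_add S T : rational S -> rational T -> rational (ser_add S T)
| rat_mul S T : rational S -> rational T -> rational (ser_mul S T)
| rat_star U : U 0%N = 0 -> rational U -> rational (ser_star U).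

Definition ult_geometric (S : series) :=
  exists (kappa : nat) (gamma : K), forall k, (kappa <= k)%N -> S k.+1 = gamma * S k.

(* merge of Ss 0, ..., Ss (c-1): coefficient of X^(k c + j) is <Ss j, X^k> *)
Definition ser_merge (c : nat) (Ss : nat -> series) : series :=
  fun n => Ss (n %% c)%N (n %/ c)%N.

End Series.

From HB Require Import structures.
From mathcomp Require Import all_boot all_order all_algebra boolp.
Set Implicit Arguments. Unset Strict Implicit. Unset Printing Implicit Defensive.
Import GRing.Theory.
Local Open Scope ring_scope.

(* A series is a merge of ultimately geometric series exactly when, for some period [c], the
   ratio between the coefficients of [X^(n+c)] and [X^n] eventually depends only on [n mod c].
   Polynomials and the terms [u X^s (q X^c)^*] have this property, and the rational operations
   preserve it.  For sums, along each residue class the larger of two geometric progressions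
   eventually dominates, the natural order being linear.  For products, both factors are finite
   sums of terms [u X^s (q X^c)^*] with a common period, and these multiply to terms of the same
   shape since [(q X^c)^* (r X^c)^* = ((q + r) X^c)^*] in an idempotent semiring.  For stars, the
   same decomposition turns [U^*] into a product of stars of single terms, which are computed
   explicitly.  Conversely such a series is visibly of the normal form
   [P + X^(kappa c) (+)_i u_i X^i (q_i X^c)^*], which is rational. *)

HB.instance Definition _ (K : comPzSemiRingType) := gen_eqMixin (series K).
HB.instance Definition _ (K : comPzSemiRingType) := gen_choiceMixin (series K).

Section SeriesSemiring.
Variable K : comPzSemiRingType.
Implicit Types (S T U : series K) (a b : K).

Fact ser_addA : associative (@ser_add K).
Proof. by move=> S T U; apply: funext => n; rewrite /ser_add addrA. Qed.

Fact ser_addC : commutative (@ser_add K).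
Proof. by move=> S T; apply: funext => n; rewrite /ser_add addrC. Qed.

Fact ser_add0s : left_id (ser_C 0) (@ser_add K).
Proof. by move=> S; apply: funext => n; rewrite /ser_add /ser_C; case: eqP; rewrite add0r. Qed.

HB.instance Definition _ := GRing.isNmodule.Build (series K) ser_addA ser_addC ser_add0s.

Lemma ser_mul_rev S T n : ser_mul S T n = \sum_(i < n.+1) S (n - i)%N * T i.
Proof.
rewrite /ser_mul (reindex_inj rev_ord_inj) /=.
by apply: eq_bigr => i _; rewrite (sub_ordK i).
Qed.

Fact ser_mulA : associative (@ser_mul K).
Proof.
move=> S T U; apply: funext => n; rewrite {1}/ser_mul ser_mul_rev.
pose F i j := S i * (T (n - i - j)%N * U j).
transitivity (\sum_(i < n.+1) \sum_(j < n.+1 | (j <= n - i)%N) F i j).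
  apply: eq_bigr => /= i _; rewrite ser_mul_rev big_distrr /=.
  by rewrite (big_ord_narrow_leq (leq_subr _ _)).
rewrite (exchange_big_dep predT) //=; apply: eq_bigr => j _.
transitivity (\sum_(i < n.+1 | (i <= n - j)%N) F i j).
  apply: eq_bigl => i; rewrite -ltnS -(ltnS i) -!subSn ?leq_ord //.
  by rewrite -subn_gt0 -(subn_gt0 i) -!subnDA addnC.
rewrite (big_ord_narrow_leq (leq_subr _ _)) /ser_mul big_distrl /=.
by apply: eq_bigr => i _; rewrite /F -!subnDA addnC mulrA.
Qed.

Fact ser_mulC : commutative (@ser_mul K).
Proof.
move=> S T; apply: funext => n; rewrite ser_mul_rev /ser_mul.
by apply: eq_bigr => i _; rewrite mulrC.
Qed.

Fact ser_mul1s : left_id (ser_C 1) (@ser_mul K).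
Proof.
move=> S; apply: funext => n; rewrite /ser_mul big_ord_recl subn0 /ser_C /=.
by rewrite big1 => [|i _]; rewrite ?mul1r ?addr0 // mul0r.
Qed.

Fact ser_mulDl : left_distributive (@ser_mul K) (@ser_add K).
Proof.
move=> S T U; apply: funext => n; rewrite /ser_mul /ser_add -big_split /=.
by apply: eq_bigr => i _; rewrite mulrDl.
Qed.

Fact ser_mul0s : left_zero (ser_C 0) (@ser_mul K).
Proof.
move=> S; apply: funext => n; rewrite /ser_mul /ser_C /= if_same big1 // => i _.
by rewrite if_same mul0r.
Qed.

HB.instance Definition _ := GRing.Nmodule_isComPzSemiRing.Build (series K)
  ser_mulA ser_mulC ser_mul1s ser_mulDl ser_mul0s.

Lemma ser_addE S T : ser_add S T = S + T. Proof. by []. Qed.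
Lemma ser_mulE S T : ser_mul S T = S * T. Proof. by []. Qed.
Lemma ser_C0 : ser_C 0 = 0 :> series K. Proof. by []. Qed.
Lemma ser_C1 : ser_C 1 = 1 :> series K. Proof. by []. Qed.

Lemma coefD S T n : (S + T) n = S n + T n. Proof. by []. Qed.
Lemma coefM S T n : (S * T) n = \sum_(i < n.+1) S i * T (n - i)%N. Proof. by []. Qed.
Lemma coef0 n : (0 : series K) n = 0. Proof. by rewrite /GRing.zero /= /ser_C if_same. Qed.
Lemma coef1 n : (1 : series K) n = (n == 0%N)%:R. Proof. by rewrite /GRing.one /= /ser_C; case: eqP. Qed.
Lemma coefC a n : ser_C a n = if n == 0%N then a else 0. Proof. by []. Qed.
Lemma coefXn m n : ser_Xn K m n = (n == m)%:R. Proof. by rewrite /ser_Xn; case: eqP. Qed.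

Lemma coef_sum I (r : seq I) (P : pred I) (F : I -> series K) n :
  (\sum_(i <- r | P i) F i) n = \sum_(i <- r | P i) F i n.
Proof. by apply: (big_morph (fun S : series K => S n)) => [S T|]; rewrite ?coefD ?coef0. Qed.

Lemma coefM0 S T : (S * T) 0%N = S 0%N * T 0%N.
Proof. by rewrite coefM big_ord_recl big_ord0 addr0 subn0. Qed.

Lemma coefCM a S n : (ser_C a * S) n = a * S n.
Proof.
rewrite coefM big_ord_recl /= subn0 coefC /= big1 ?addr0 // => i _.
by rewrite coefC mul0r.
Qed.

Lemma coefXnM m S n : (ser_Xn K m * S) n = if (m <= n)%N then S (n - m)%N else 0.
Proof.
rewrite coefM; case: leqP => hm.
  rewrite (bigD1 (Ordinal (hm : m < n.+1)%N)) //= coefXn eqxx mul1r big1 ?addr0 // => i hi.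
  rewrite coefXn; case: eqP => [him|_]; last by rewrite mul0r.
  by case/eqP: hi; apply: val_inj.
rewrite big1 // => i _; rewrite coefXn; case: eqP => [him|]; last by rewrite mul0r.
by have := ltn_ord i; rewrite him ltnS leqNgt hm.
Qed.

Lemma coefCXn a m n : (ser_C a * ser_Xn K m) n = if n == m then a else 0.
Proof. by rewrite coefCM coefXn; case: eqP; rewrite ?mulr1 ?mulr0. Qed.

Lemma ser_CM a b : ser_C a * ser_C b = ser_C (a * b).
Proof. by apply: funext => n; rewrite coefCM !coefC; case: eqP; rewrite ?mulr0. Qed.

Lemma ser_CD a b : ser_C a + ser_C b = ser_C (a + b).
Proof. by apply: funext => n; rewrite coefD !coefC; case: eqP; rewrite ?addr0. Qed.

Lemma ser_Xn0 : ser_Xn K 0 = 1.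
Proof. by apply: funext => n; rewrite coefXn coef1. Qed.

Lemma ser_XnD s t : ser_Xn K s * ser_Xn K t = ser_Xn K (s + t).
Proof.
apply: funext => n; rewrite coefXnM !coefXn; case: leqP => h.
  by rewrite -(eqn_add2r s) subnK // addnC.
by case: eqP => // e; move: h; rewrite e ltnNge leq_addr.
Qed.

Lemma coefCXn_0 a c : (0 < c)%N -> (ser_C a * ser_Xn K c) 0%N = 0.
Proof. by case: c => // c _; rewrite coefCXn. Qed.

End SeriesSemiring.

Section Star.
Variable K : comPzSemiRingType.
Implicit Types (S U V W : series K).

Lemma ser_powE U k : ser_pow U k = U ^+ k.
Proof. by elim: k => // k IH; rewrite exprS -IH. Qed.

Lemma coefX_small U k n : U 0%N = 0 -> (n < k)%N -> (U ^+ k) n = 0.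
Proof.
move=> U0; elim: k n => // k IH n hn; rewrite exprS coefM big1 // => i _.
case: (posnP i) => [->|i0]; first by rewrite U0 mul0r.
rewrite IH ?mulr0 // ltn_subLR; last by rewrite -ltnS.
by apply: leq_trans hn _; rewrite -add1n leq_add2r.
Qed.

Lemma coef_star U n M : U 0%N = 0 -> (n < M)%N ->
  ser_star U n = \sum_(k < M) (U ^+ k) n.
Proof.
move=> U0 hM; rewrite /ser_star -(subnKC hM) big_split_ord /=.
rewrite [X in _ = _ + X]big1 ?addr0 => [|i _]; last by rewrite coefX_small // ltn_addr.
by apply: eq_bigr => i _; rewrite ser_powE.
Qed.

Lemma star_fixpoint U : U 0%N = 0 -> ser_star U = 1 + U * ser_star U.
Proof.
move=> U0; apply: funext => n; rewrite coefD (coef_star (M := n.+2)) //.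
rewrite big_ord_recl expr0; congr (_ + _); rewrite coefM.
transitivity (\sum_(i < n.+1) \sum_(k < n.+1) U i * (U ^+ k) (n - i)%N); last first.
  by apply: eq_bigr => i _; rewrite (coef_star (M := n.+1)) ?big_distrr // ltnS leq_subr.
by rewrite exchange_big /=; apply: eq_bigr => k _; rewrite /bump /= exprS coefM.
Qed.

(* [W = 1 + U W] determines the coefficients of [W] degree by degree since [U 0 = 0]. *)
Lemma star_unique U W : U 0%N = 0 -> W = 1 + U * W -> W = ser_star U.
Proof.
move=> U0 hW; have hS := star_fixpoint U0; apply: funext => n.
elim: n {-2}n (leqnn n) => [|n IH] m hm.
  by move: hm; rewrite leqn0 => /eqP ->; rewrite hW hS !coefD !coefM0 U0 !mul0r.
rewrite hW hS !coefD !coefM !big_ord_recl U0 !mul0r !add0r; congr (_ + _).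
by apply: eq_bigr => i _; rewrite IH // leq_subLR (leq_trans hm) // -add1n leq_add2r.
Qed.

Lemma star0 : ser_star (0 : series K) = 1.
Proof. by symmetry; apply: star_unique; rewrite ?coef0 // mul0r addr0. Qed.

Hypothesis Hidem : idempotent_sr K.

Lemma ser_addss S : S + S = S.
Proof. by apply: funext => n; rewrite coefD Hidem. Qed.

Lemma starD U V : U 0%N = 0 -> V 0%N = 0 ->
  ser_star (U + V) = ser_star U * ser_star V.
Proof.
move=> U0 V0; symmetry; apply: star_unique; first by rewrite coefD U0 V0 addr0.
set u := ser_star U; set v := ser_star V; set x := U * u; set y := V * v.
have hu : u = 1 + x by apply: star_fixpoint.
have hv : v = 1 + y by apply: star_fixpoint.
have huv : u * v = 1 + (x + y + x * y).
  by rewrite {1}hu {1}hv mulrDl !mulrDr !mul1r mulr1 -!addrA; congr (_ + _); rewrite addrCA.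
have hUuv : U * (u * v) = x + x * y by rewrite {1}hv mulrDr mulr1 mulrDr mulrA.
have hVuv : V * (u * v) = y + x * y by rewrite {1}hu mulrDl mul1r mulrDr mulrCA.
by rewrite mulrDl hUuv hVuv huv addrACA ser_addss.
Qed.

Lemma star_sum I (r : seq I) (F : I -> series K) : (forall i, F i 0%N = 0) ->
  ser_star (\sum_(i <- r) F i) = \prod_(i <- r) ser_star (F i).
Proof.
move=> hF; elim: r => [|i r IH]; first by rewrite !big_nil star0.
by rewrite !big_cons starD ?IH // coef_sum big1.
Qed.

Lemma star_mul_star U : U 0%N = 0 -> ser_star U * ser_star U = ser_star U.
Proof. by move=> U0; rewrite -starD // ser_addss. Qed.

End Star.

Section GeometricTerms.
Variable K : comPzSemiRingType.

Definition geom (a : K) (s : nat) (q : K) (c : nat) : series K :=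
  ser_C a * ser_Xn K s * ser_star (ser_C q * ser_Xn K c).

Lemma coef_starCXn q c n : (0 < c)%N ->
  ser_star (ser_C q * ser_Xn K c) n = if (c %| n)%N then q ^+ (n %/ c) else 0.
Proof.
move=> c0; pose W : series K := fun n => if (c %| n)%N then q ^+ (n %/ c) else 0.
suff <- : W = ser_star (ser_C q * ser_Xn K c) by [].
apply: star_unique; first exact: coefCXn_0.
apply: funext => -[|m]; rewrite coefD coef1 -mulrA coefCM coefXnM /W.
  by rewrite dvdn0 div0n expr0 leqNgt c0 mulr0 addr0.
rewrite add0r; case: leqP => hc; last by rewrite gtnNdvd // mulr0.
rewrite -{1 2}(subnK hc) dvdn_addl // divnDr // divnn c0 addn1 exprS.
by case: (c %| _)%N; rewrite ?mulr0.
Qed.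

Lemma coef_geom a s q c n : (0 < c)%N ->
  geom a s q c n = if (s <= n)%N && (c %| n - s)%N then a * q ^+ ((n - s) %/ c) else 0.
Proof.
move=> c0; rewrite /geom -mulrA coefCM coefXnM.
case: leqP => h /=; last by rewrite mulr0.
by rewrite coef_starCXn //; case: ifP; rewrite ?mulr0.
Qed.

Lemma geom_q0 a s c : geom a s 0 c = ser_C a * ser_Xn K s.
Proof. by rewrite /geom ser_C0 mul0r star0 mulr1. Qed.

Lemma geom_starCXn q c : ser_star (ser_C q * ser_Xn K c) = geom 1 0 q c.
Proof. by rewrite /geom ser_C1 ser_Xn0 !mul1r. Qed.

Hypothesis Hidem : idempotent_sr K.

Lemma geomM a s q b t r c : (0 < c)%N ->
  geom a s q c * geom b t r c = geom (a * b) (s + t) (q + r) c.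
Proof.
move=> c0; rewrite /geom mulrACA [ser_C a * _ * _]mulrACA ser_CM ser_XnD.
by rewrite -starD ?coefCXn_0 // -mulrDl ser_CD.
Qed.

Lemma star_geom a s q c : (0 < s)%N -> (0 < c)%N ->
  ser_star (geom a s q c) =
  1 + ser_C a * ser_Xn K s * ser_star (ser_C a * ser_Xn K s) * ser_star (ser_C q * ser_Xn K c).
Proof.
move=> s0 c0; rewrite /geom.
set A := ser_C a * ser_Xn K s; set Y := ser_star (ser_C q * ser_Xn K c).
have A0 : A 0%N = 0 by rewrite /A coefCXn; case: eqP => // e; move: s0; rewrite -e.
symmetry; apply: star_unique; first by rewrite coefM0 A0 mul0r.
have hA : ser_star A = 1 + A * ser_star A by apply: star_fixpoint.
have hY : Y * Y = Y by apply: star_mul_star => //; apply: coefCXn_0.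
congr (_ + _); rewrite mulrDr mulr1 [in LHS]hA mulrDr mulr1 mulrDl; congr (_ + _).
by rewrite -[in LHS]hY mulrACA.
Qed.

End GeometricTerms.

Lemma fin_choice (A : Type) (a0 : A) c (P : nat -> A -> Prop) :
  (forall j, (j < c)%N -> exists x, P j x) ->
  exists f : nat -> A, forall j, (j < c)%N -> P j (f j).
Proof.
move=> h; have hP j : exists x, (j < c)%N -> P j x.
  by case: (ltnP j c) => [/h [x hx]|_]; [exists x | exists a0].
by have [f hf] := choice hP; exists f.
Qed.

Section NaturalOrder.
Variable K : comPzSemiRingType.
Implicit Types x y z : K.

Lemma sr_le_trans x y z : sr_le x y -> sr_le y z -> sr_le x z.
Proof. by rewrite /sr_le => hxy hyz; rewrite -hyz addrA hxy. Qed.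

Lemma sr_le_mul2l x y z : sr_le x y -> sr_le (z * x) (z * y).
Proof. by rewrite /sr_le => h; rewrite -mulrDr h. Qed.

Lemma sr_le_mul2r x y z : sr_le x y -> sr_le (x * z) (y * z).
Proof. by rewrite /sr_le => h; rewrite -mulrDl h. Qed.

End NaturalOrder.

Section PeriodicRatio.
Variable K : comPzSemiRingType.
Implicit Types (S T : series K) (g h : nat -> K).

(* From degree [N] on, the ratio between coefficients [c] apart depends only on the residue
   class modulo [c]: [S] is then a merge of [c] series that are geometric from rank [N / c]. *)
Definition periodic_ratio (c N : nat) g S :=
  forall n, (N <= n)%N -> S (n + c)%N = g (n %% c)%N * S n.

Definition merge_geom S := exists c N g, (0 < c)%N /\ periodic_ratio c N g S.

Lemma periodic_ratio_iter c N g S n k : periodic_ratio c N g S -> (N <= n)%N ->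
  S (n + k * c)%N = g (n %% c)%N ^+ k * S n.
Proof.
move=> hS hn; elim: k => [|k IH]; first by rewrite mul0n addn0 expr0 mul1r.
rewrite mulSn addnA addnAC hS; last by rewrite (leq_trans hn) // leq_addr.
by rewrite [in (_ %% c)%N]addnC modnMDl IH exprS mulrA.
Qed.

Lemma periodic_ratio_mulr c N g S m : (0 < m)%N -> periodic_ratio c N g S ->
  periodic_ratio (c * m) N (fun j => g (j %% c)%N ^+ m) S.
Proof.
move=> m0 hS n hn; rewrite mulnC (periodic_ratio_iter _ hS hn).
by rewrite modn_dvdm // dvdn_mull.
Qed.

Lemma periodic_ratio_le c N N' g S : (N <= N')%N ->
  periodic_ratio c N g S -> periodic_ratio c N' g S.
Proof. by move=> hN hS n hn; apply: hS; apply: leq_trans hn. Qed.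

Lemma merge_geom_poly S N : (forall n, (N <= n)%N -> S n = 0) -> merge_geom S.
Proof.
move=> hS; exists 1%N, N, (fun _ => 0); split => // n hn.
by rewrite mul0r hS // (leq_trans hn) // leq_addr.
Qed.

Lemma merge_geom0 : merge_geom 0.
Proof. by apply: (@merge_geom_poly _ 0) => n _; rewrite coef0. Qed.

Lemma merge_geom1 : merge_geom 1.
Proof. by apply: (@merge_geom_poly _ 1) => -[|n] //; rewrite coef1. Qed.

Lemma merge_geom_geom a s q c : (0 < c)%N -> merge_geom (geom a s q c).
Proof.
move=> c0; exists c, s, (fun _ => q); split => // n hn.
rewrite !coef_geom // hn (leq_trans hn (leq_addr _ _)) /= -addnBAC //.
rewrite dvdn_addl // divnDr // divnn c0 addn1 exprS.
by case: (c %| n - s)%N; rewrite ?mulr0 // mulrCA.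
Qed.

Lemma coef_sum_geom c M (u q : nat -> K) n : (0 < c)%N -> (M <= n)%N ->
  (\sum_(j < c) geom (u j) (M + j) (q j) c) n =
  u ((n - M) %% c)%N * q ((n - M) %% c)%N ^+ ((n - M) %/ c).
Proof.
move=> c0 hM; rewrite coef_sum.
rewrite (bigD1 (Ordinal (ltn_pmod (n - M) c0))) //= big1 ?addr0 => [|j hj].
  rewrite coef_geom // -leq_subRL // leq_mod /= subnDA.
  have -> : (n - M - (n - M) %% c = (n - M) %/ c * c)%N.
    by rewrite {1}(divn_eq (n - M) c) addnK.
  by rewrite dvdn_mull // mulnK.
rewrite coef_geom //; case: ifP => // /andP [h1 h2]; case/eqP: hj.
apply: val_inj => /=; rewrite -leq_subRL // in h1; rewrite subnDA in h2.
by rewrite -(subnK h1) -(divnK h2) modnMDl modn_small.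
Qed.

Lemma coef_sum_geom_small c M (u q : nat -> K) n : (0 < c)%N -> (n < M)%N ->
  (\sum_(j < c) geom (u j) (M + j) (q j) c) n = 0.
Proof.
move=> c0 hM; rewrite coef_sum big1 // => j _; rewrite coef_geom //.
by rewrite leqNgt (leq_trans hM) ?leq_addr.
Qed.

Lemma periodic_ratio_decomp c N g S : (0 < c)%N -> periodic_ratio c N g S ->
  S = \sum_(m < N) ser_C (S m) * ser_Xn K m
      + \sum_(j < c) geom (S (N + j)%N) (N + j) (g ((N + j) %% c)%N) c.
Proof.
move=> c0 hS; apply: funext => n; rewrite coefD.
pose u j := S (N + j)%N; pose q j := g ((N + j) %% c)%N.
case: (ltnP n N) => hn.
  rewrite (coef_sum_geom_small u q) // addr0 coef_sum (bigD1 (Ordinal hn)) //= coefCXn eqxx.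
  rewrite big1 ?addr0 // => m hm; rewrite coefCXn; case: eqP => // e.
  by case/eqP: hm; apply: val_inj.
rewrite coef_sum big1 ?add0r => [|m _]; last first.
  by rewrite coefCXn; case: eqP => // e; have := ltn_ord m; rewrite -e ltnNge hn.
rewrite (coef_sum_geom u q) // /u /q.
set r := ((n - N) %% c)%N; set k := ((n - N) %/ c)%N.
have -> : n = (N + r + k * c)%N.
  by rewrite -addnA [X in (N + X)%N]addnC -divn_eq subnKC.
by rewrite (periodic_ratio_iter _ hS) ?leq_addr // mulrC.
Qed.

End PeriodicRatio.

Section Closure.
Variable K : comPzSemiRingType.
Hypothesis Hidem : idempotent_sr K.
Hypothesis Hlin : linearly_ordered_sr K.
Implicit Types (S T U : series K).

Definition geom_span c S :=
  exists l : seq (K * nat * K), S = \sum_(t <- l) geom t.1.1 t.1.2 t.2 c.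

Lemma geom_span0 c : geom_span c 0.
Proof. by exists [::]; rewrite big_nil. Qed.

Lemma geom_span_geom c a s q : geom_span c (geom a s q c).
Proof. by exists [:: (a, s, q)]; rewrite big_seq1. Qed.

Lemma geom_spanD c S T : geom_span c S -> geom_span c T -> geom_span c (S + T).
Proof. by case=> l1 -> [l2 ->]; exists (l1 ++ l2); rewrite big_cat. Qed.

Lemma geom_span_sum c I (r : seq I) (F : I -> series K) :
  (forall i, geom_span c (F i)) -> geom_span c (\sum_(i <- r) F i).
Proof.
move=> hF; elim: r => [|i r IH]; first by rewrite big_nil; apply: geom_span0.
by rewrite big_cons; apply: geom_spanD.
Qed.

Lemma geom_spanM c S T : (0 < c)%N ->
  geom_span c S -> geom_span c T -> geom_span c (S * T).
Proof.
move=> c0 [l1 ->] [l2 ->]; rewrite big_distrl /=; apply: geom_span_sum => t1.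
by rewrite big_distrr /=; apply: geom_span_sum => t2; rewrite geomM //; apply: geom_span_geom.
Qed.

Lemma periodic_ratio_span c N g S : (0 < c)%N -> periodic_ratio c N g S -> geom_span c S.
Proof.
move=> c0 hS; rewrite (periodic_ratio_decomp c0 hS); apply: geom_spanD.
  by apply: geom_span_sum => m; rewrite -(geom_q0 _ _ c); apply: geom_span_geom.
by apply: geom_span_sum => j; apply: geom_span_geom.
Qed.

(* Along the residue class [j], once [S n <= T n] holds it persists because [g j <= h j]:
   the sum then follows [T]; otherwise it follows [S] throughout. *)
Lemma periodic_ratio_classD c N g h S T j : (0 < c)%N ->
  periodic_ratio c N g S -> periodic_ratio c N h T -> sr_le (g j) (h j) ->
  exists (M : nat) (r : K), forall n, (M <= n)%N -> (n %% c)%N = j ->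
    (S + T) (n + c)%N = r * (S + T) n.
Proof.
move=> c0 hS hT hgh.
case: (EM (exists n, [/\ (N <= n)%N, (n %% c)%N = j & sr_le (S n) (T n)])).
  case=> n0 [hn0 hj hle].
  have hk k : sr_le (S (n0 + k * c)%N) (T (n0 + k * c)%N).
    elim: k => [|k IH]; first by rewrite mul0n addn0.
    have hN : (N <= n0 + k * c)%N by rewrite (leq_trans hn0) ?leq_addr.
    rewrite mulSn addnA addnAC hS // hT // [in (_ %% c)%N]addnC modnMDl hj.
    exact: sr_le_trans (sr_le_mul2r _ hgh) (sr_le_mul2l _ IH).
  have hST n : (n0 <= n)%N -> (n %% c)%N = j -> (S + T) n = T n.
    move=> hn hnj; have hd : (c %| n - n0)%N by rewrite -eqn_mod_dvd // hnj hj.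
    by rewrite coefD -(subnKC hn) -(divnK hd) hk.
  exists n0, (h j) => n hn hnj.
  rewrite !hST ?modnDr // ?hT ?hnj ?(leq_trans hn0 hn) //.
  by rewrite (leq_trans hn) ?leq_addr.
move=> hTS; have hST n : (N <= n)%N -> (n %% c)%N = j -> (S + T) n = S n.
  move=> hn hnj; rewrite coefD.
  case: (Hlin (S n) (T n)) => hl; last by rewrite addrC hl.
  by case: hTS; exists n.
exists N, (g j) => n hn hnj.
by rewrite !hST ?modnDr ?hS ?hnj // (leq_trans hn) ?leq_addr.
Qed.

Lemma merge_geomD S T : merge_geom S -> merge_geom T -> merge_geom (S + T).
Proof.
case=> [c1 [N1 [g1 [c10 h1]]]] [c2 [N2 [g2 [c20 h2]]]].
set c := (c1 * c2)%N; have c0 : (0 < c)%N by rewrite muln_gt0 c10.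
have hS := periodic_ratio_le (leq_addr N2 N1) (periodic_ratio_mulr c20 h1).
have hT := periodic_ratio_le (leq_addl N1 N2) (periodic_ratio_mulr c10 h2).
rewrite mulnC -/c in hT.
set g := (fun j => _) in hS; set h := (fun j => _) in hT.
have hclass j : (j < c)%N -> exists Mr : nat * K, forall n, (Mr.1 <= n)%N ->
    (n %% c)%N = j -> (S + T) (n + c)%N = Mr.2 * (S + T) n.
  move=> _; have [M [r hr]] : exists M r, forall n, (M <= n)%N ->
      (n %% c)%N = j -> (S + T) (n + c)%N = r * (S + T) n.
    case: (Hlin (g j) (h j)) => hl; first exact: periodic_ratio_classD hS hT hl.
    by rewrite addrC; exact: periodic_ratio_classD hT hS hl.
  by exists (M, r).
have [f hf] := fin_choice (0%N, 0) hclass.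
exists c, (\max_(j < c) (f j).1)%N, (fun j => (f j).2); split => // n hn.
have hj : (n %% c < c)%N by rewrite ltn_pmod.
apply: hf => //; apply: leq_trans hn.
exact: (@leq_bigmax _ (fun j : 'I_c => (f j).1) (Ordinal hj)).
Qed.

Lemma merge_geom_span c S : (0 < c)%N -> geom_span c S -> merge_geom S.
Proof.
move=> c0 [l ->]; elim: l => [|t l IH]; first by rewrite big_nil; apply: merge_geom0.
by rewrite big_cons; apply: merge_geomD => //; apply: merge_geom_geom.
Qed.

Lemma merge_geomM S T : merge_geom S -> merge_geom T -> merge_geom (S * T).
Proof.
case=> [c1 [N1 [g1 [c10 h1]]]] [c2 [N2 [g2 [c20 h2]]]].
have c0 : (0 < c1 * c2)%N by rewrite muln_gt0 c10.
have hS := periodic_ratio_mulr c20 h1.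
have hT := periodic_ratio_mulr c10 h2; rewrite mulnC in hT.
apply: (merge_geom_span c0); apply: geom_spanM => //.
  exact: periodic_ratio_span hS.
exact: periodic_ratio_span hT.
Qed.

Lemma merge_geom_prod I (r : seq I) (F : I -> series K) :
  (forall i, merge_geom (F i)) -> merge_geom (\prod_(i <- r) F i).
Proof.
move=> hF; elim: r => [|i r IH]; first by rewrite big_nil; apply: merge_geom1.
by rewrite big_cons; apply: merge_geomM.
Qed.

Lemma merge_geom_star_poly N (p : nat -> K) : p 0%N = 0 ->
  merge_geom (ser_star (\sum_(m < N) ser_C (p m) * ser_Xn K m)).
Proof.
move=> p0; rewrite (star_sum Hidem) => [|m]; last by case: m => -[|m] ?; rewrite coefCXn ?p0.
apply: merge_geom_prod => -[[|m] ?].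
  by rewrite p0 ser_C0 mul0r star0; apply: merge_geom1.
by rewrite geom_starCXn; apply: merge_geom_geom.
Qed.

Lemma merge_geom_star_geom (a q : K) (s c : nat) : (0 < s)%N -> (0 < c)%N ->
  merge_geom (ser_star (geom a s q c)).
Proof.
move=> s0 c0; rewrite star_geom //; apply: merge_geomD; first exact: merge_geom1.
rewrite !geom_starCXn -(geom_q0 _ _ 1).
by apply: merge_geomM; [apply: merge_geomM|]; apply: merge_geom_geom.
Qed.

(* Split [U] into its polynomial part below [N] and its geometric tail; shifting [N] to be
   positive makes every summand vanish at degree 0, so the star of the sum is the product of
   the stars. *)
Lemma merge_geom_star U : U 0%N = 0 -> merge_geom U -> merge_geom (ser_star U).
Proof.
move=> U0 [c [M [g [c0 hUM]]]].
have hU := periodic_ratio_le (leq_addl 1 M) hUM; set N := (1 + M)%N in hU.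
have N_gt0 : (0 < N)%N by [].
rewrite (periodic_ratio_decomp c0 hU) (starD Hidem); first last.
- by rewrite coef_sum big1 // => j _; rewrite coef_geom // addn_gt0 N_gt0.
- by rewrite coef_sum big1 // => m _; rewrite coefCXn; case: eqP => // <-.
apply: merge_geomM; first exact: merge_geom_star_poly.
rewrite (star_sum Hidem) => [|j]; last by rewrite coef_geom // addn_gt0 N_gt0.
by apply: merge_geom_prod => j; apply: merge_geom_star_geom; rewrite ?addn_gt0 ?N_gt0.
Qed.

Lemma rational_merge_geom S : rational S -> merge_geom S.
Proof.
elim=> [P [N hP]|S1 S2 _ h1 _ h2|S1 S2 _ h1 _ h2|V V0 _ hV].
- exact: merge_geom_poly hP.
- exact: merge_geomD.
- exact: merge_geomM.
- exact: merge_geom_star.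
Qed.

End Closure.

Section NormalForms.
Variable K : comPzSemiRingType.
Implicit Types S : series K.

Definition ult_geom_merge S := exists (c : nat) (Ss : nat -> series K),
  (1 <= c)%N /\ (forall j, (j < c)%N -> ult_geometric (Ss j)) /\ S = ser_merge c Ss.

Definition geom_normal_form S := exists (kappa c : nat) (P : series K) (u q : nat -> K),
  (1 <= c)%N /\ (forall n, (kappa * c <= n)%N -> P n = 0) /\
  S = ser_add P (ser_mul (ser_Xn K (kappa * c))
        (ser_bigsum c (fun i => ser_mul (ser_mul (ser_C (u i)) (ser_Xn K i))
                                        (ser_star (ser_mul (ser_C (q i)) (ser_Xn K c)))))).

Lemma merge_geomP S : merge_geom S <-> ult_geom_merge S.
Proof.
split=> [[c [N [g [c0 hS]]]]|[c [Ss [c0 [hSs ->]]]]].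
  exists c, (fun j k => S (k * c + j)%N); split => //; split.
    move=> j hj; exists N, (g j) => k hk; rewrite mulSn -addnA addnC hS.
      by rewrite modnMDl modn_small.
    by rewrite (leq_trans hk) // (leq_trans (leq_pmulr _ c0)) // leq_addr.
  by apply: funext => n; rewrite /ser_merge -divn_eq.
have hSs' j : (j < c)%N -> exists Mr : nat * K,
    forall k, (Mr.1 <= k)%N -> Ss j k.+1 = Mr.2 * Ss j k.
  by move=> /hSs [M [r hr]]; exists (M, r).
have [f hf] := fin_choice (0%N, 0 : K) hSs'.
exists c, (c * \max_(j < c) (f j).1)%N, (fun j => (f j).2); split => // n hn.
have hj : (n %% c < c)%N by rewrite ltn_pmod.
rewrite /ser_merge modnDr divnDr // divnn c0 addn1; apply: hf => //.
rewrite leq_divRL // (leq_trans _ hn) // mulnC leq_mul2l.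
by rewrite (@leq_bigmax _ (fun j : 'I_c => (f j).1) (Ordinal hj)) orbT.
Qed.

(* Take [kappa = N]: below [N c] the series is its own polynomial part, and from [N c] on the
   coefficient of [X^(N c + i + k c)] is [S (N c + i) * g i ^ k]. *)
Lemma merge_geom_normal_form S : merge_geom S -> geom_normal_form S.
Proof.
move=> [c [N [g [c0 hS]]]].
exists N, c, (fun n => if (n < N * c)%N then S n else 0), (fun i => S (N * c + i)%N), g.
split => //; split=> [n hn|]; first by rewrite ltnNge hn.
rewrite ser_addE ser_mulE; apply: funext => n; rewrite coefD coefXnM.
case: ltnP => hn; first by rewrite addr0.
have -> : ser_bigsum c (fun i => ser_mul (ser_mul (ser_C (S (N * c + i)%N)) (ser_Xn K i))
    (ser_star (ser_mul (ser_C (g i)) (ser_Xn K c))))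
  = \sum_(i < c) geom (S (N * c + i)%N) (0 + i) (g i) c.
  by apply: funext => m; rewrite coef_sum.
rewrite add0r (coef_sum_geom (fun i => S (N * c + i)%N) g) // subn0.
set r := ((n - N * c) %% c)%N; set k := ((n - N * c) %/ c)%N.
have -> : n = (N * c + r + k * c)%N.
  by rewrite -addnA [X in (_ + X)%N]addnC -divn_eq subnKC.
rewrite (periodic_ratio_iter _ hS); last first.
  by rewrite (leq_trans (leq_pmulr _ c0)) // leq_addr.
by rewrite modnMDl modn_mod mulrC.
Qed.

Lemma rational_C (a : K) : rational (ser_C a).
Proof. by apply: rat_poly; exists 1%N => -[]. Qed.

Lemma rational_Xn m : rational (ser_Xn K m).
Proof. by apply: rat_poly; exists m.+1 => n hn; rewrite coefXn gtn_eqF. Qed.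

Lemma rational_bigsum c (F : nat -> series K) :
  (forall i, (i < c)%N -> rational (F i)) -> rational (ser_bigsum c F).
Proof.
elim: c => [|c IH] hF; first by apply: rat_poly; exists 0%N => n _; rewrite /ser_bigsum big_ord0.
have -> : ser_bigsum c.+1 F = ser_add (ser_bigsum c F) (F c).
  by apply: funext => n; rewrite /ser_bigsum big_ord_recr.
apply: rat_add; last exact: hF.
by apply: IH => i hi; apply: hF; rewrite ltnS ltnW.
Qed.

Lemma geom_normal_form_rational S : geom_normal_form S -> rational S.
Proof.
move=> [kappa [c [P [u [q [c0 [hP ->]]]]]]].
have rat_CXn a m : rational (ser_mul (ser_C a) (ser_Xn K m)).
  by apply: rat_mul; [exact: rational_C | exact: rational_Xn].
apply: rat_add; first by apply: rat_poly; exists (kappa * c)%N.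
apply: rat_mul; first exact: rational_Xn.
apply: rational_bigsum => i _; apply: rat_mul => //.
by apply: rat_star => //; exact: coefCXn_0.
Qed.

End NormalForms.

Theorem theorem3 (K : comPzSemiRingType)
  (Hidem : idempotent_sr K) (Hlin : linearly_ordered_sr K) (Harch : archimedian_sr K)
  (S : series K) :
  (rational S <->
     (exists (c : nat) (Ss : nat -> series K),
       (1 <= c)%N /\ (forall j, (j < c)%N -> ult_geometric (Ss j)) /\ S = ser_merge c Ss))
  /\
  (rational S <->
     (exists (kappa c : nat) (P : series K) (u q : nat -> K),
       (1 <= c)%N /\ (forall n, (kappa * c <= n)%N -> P n = 0) /\
       S = ser_add P
             (ser_mul (ser_Xn K (kappa * c))
                (ser_bigsum c (fun i =>
                   ser_mul (ser_mul (ser_C (u i)) (ser_Xn K i))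
                           (ser_star (ser_mul (ser_C (q i)) (ser_Xn K c)))))))).
Proof.
have rational_merge := rational_merge_geom Hidem Hlin (S := S).
have merge_rational : merge_geom S -> rational S.
  by move/merge_geom_normal_form; exact: geom_normal_form_rational.
split; split.
- by move/rational_merge/merge_geomP.
- by move/merge_geomP/merge_rational.
- by move/rational_merge/merge_geom_normal_form.
- exact: geom_normal_form_rational.
Qed.
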